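(* Let $A$ be a subset of the nonnegative real numbers which is well ordered (for the usual order) and which has an accumulation point in $\mathbb R$ for the Euclidean topology. For a positive integer $m$ let $mA=\{x_1+\cdots+x_m\mid x_1,\dots,x_m\in A\}$. Then for every positive integer $m$, $mA$ contains a well ordered subset of ordinal type $\omega^m$.
   Context: $\omega$ denotes the ordinal type of $\mathbb N$ with its usual order. *)

From Stdlib Require Import Reals List Lra Lia.
Open Scope R_scope.

Definition well_ordered (A : R -> Prop) : Prop :=
  forall B : R -> Prop, (forall x, B x -> A x) -> (exists x, B x) ->
    exists x, B x /\ forall y, B y -> x <= y.

Definition has_accumulation_point (A : R -> Prop) : Prop :=
  exists p : R, forall eps : R, 0 < eps ->
    exists a : R, A a /\ a <> p /\ Rabs (a - p) < eps.

Fixpoint lsum (l : list R) : R :=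
  match l with nil => 0 | x :: l' => x + lsum l' end.

Definition sumset (m : nat) (A : R -> Prop) (y : R) : Prop :=
  exists l : list R, length l = m /\ Forall A l /\ lsum l = y.

(* Strict lexicographic order on sequences of naturals (first entry most significant).
   On sequences of length m this is the well-order of ordinal type omega^m. *)
Fixpoint lex_lt (s t : list nat) : Prop :=
  match s, t with
  | a :: s', b :: t' => (a < b)%nat \/ (a = b /\ lex_lt s' t')
  | _, _ => False
  end.

(* S has a subset of ordinal type omega^m: there is a strictly increasing
   (hence order-isomorphic onto its image) map from (N^m, lex) into S. *)
Definition contains_omega_pow (m : nat) (S : R -> Prop) : Prop :=
  exists f : list nat -> R,
    (forall s, length s = m -> S (f s)) /\
    (forall s t, length s = m -> length t = m -> lex_lt s t -> f s < f t).

From Stdlib Require Import Reals List.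
From Stdlib Require Import Lra Classical IndefiniteDescription.
Open Scope R_scope.

(* Let L be an accumulation point of the well-ordered set A.
   Points of A accumulate at L only from below: a gap of A just above L
   would contradict the existence of a least element of A in (L, L + e).
   Hence for every eps > 0 there is a strictly increasing sequence
   c_0 < c_1 < ... of elements of A in (L - eps, L).

   We then show by induction on k that for every eps > 0 the set of sums
   of k elements of A lying in the window (kL - eps, kL] contains a copy
   of omega^k.  For k = 0 the single point 0 does.  For k + 1, take an
   increasing sequence (c_i) of A in (L - eps/2, L), and for each i a copy
   G_i of omega^k in a window of width min(eps/2, c_(i+1) - c_i) below kL;
   the map (i :: s) |-> c_(i+1) + G_i(s) is then lexicographically
   increasing, because the i-th block lies in (c_i + kL, c_(i+1) + kL].
   The theorem follows by forgetting the window. *)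

Definition approached_from_below (A : R -> Prop) (L : R) : Prop :=
  forall e, 0 < e -> exists a, A a /\ L - e < a < L.

(* In a well-ordered set, an accumulation point is approached from below:
   otherwise some (p - e, p] misses A, and the least element x of A in
   (p, p + e) leaves the punctured neighbourhood of radius min(e, x - p)
   free of points of A. *)
Lemma accumulation_from_below (A : R -> Prop) (p : R) :
  well_ordered A ->
  (forall eps, 0 < eps -> exists a, A a /\ a <> p /\ Rabs (a - p) < eps) ->
  approached_from_below A p.
Proof.
  intros Hwo Hp. apply NNPP; intro Hnot.
  apply not_all_ex_not in Hnot as [e He].
  apply imply_to_and in He as [He_pos Hgap].
  assert (Habove : forall r, 0 < r -> r <= e -> exists a, A a /\ p < a < p + r).
  { intros r Hr Hre. destruct (Hp r Hr) as [a [Aa [Hap Habs]]].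
    exists a. split; [exact Aa|].
    destruct (Rlt_or_le a p) as [Hlt | Hle].
    - exfalso. apply Hgap. exists a. split; [exact Aa|].
      rewrite Rabs_left in Habs by lra. lra.
    - rewrite Rabs_right in Habs by lra. split; [|lra].
      destruct Hle as [Hlt | Heq]; [exact Hlt | congruence]. }
  destruct (Hwo (fun a => A a /\ p < a < p + e)) as [x [[Ax Hx] Hmin]].
  - intros x [Ax _]; exact Ax.
  - destruct (Habove e He_pos (Rle_refl e)) as [a Ha]. now exists a.
  - destruct (Habove (Rmin e (x - p))) as [a [Aa Ha]].
    + apply Rmin_pos; lra.
    + apply Rmin_l.
    + pose proof (Rmin_l e (x - p)). pose proof (Rmin_r e (x - p)).
      assert (x <= a) by (apply Hmin; split; [exact Aa | lra]). lra.
Qed.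

(* If L is approached from below by A, then every window (L - eps, L)
   contains a strictly increasing sequence of elements of A: iterate a
   choice function picking a point of A between x and L. *)
Lemma increasing_sequence_below (A : R -> Prop) (L eps : R) :
  approached_from_below A L -> 0 < eps ->
  exists c : nat -> R,
    (forall n, A (c n) /\ L - eps < c n < L) /\ (forall n, c n < c (S n)).
Proof.
  intros HL Heps.
  destruct (functional_choice
    (fun x y => x < L -> A y /\ Rmax x (L - eps) < y < L)) as [next Hnext].
  { intro x. destruct (Rlt_or_le x L) as [Hx | Hx].
    - destruct (HL (Rmin (L - x) eps)) as [a [Aa Ha]]; [apply Rmin_pos; lra|].
      exists a. intros _. split; [exact Aa|].
      pose proof (Rmin_l (L - x) eps). pose proof (Rmin_r (L - x) eps).
      split; [apply Rmax_lub_lt|]; lra.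
    - exists 0. lra. }
  assert (Hbelow : forall n, Nat.iter n next (L - eps) < L).
  { induction n as [|n IH]; [simpl; lra|].
    rewrite Nat.iter_succ. apply (Hnext _ IH). }
  exists (fun n => Nat.iter (S n) next (L - eps)). split.
  - intro n. rewrite Nat.iter_succ.
    destruct (Hnext _ (Hbelow n)) as [Ha [Hlo Hhi]].
    pose proof (Rmax_r (Nat.iter n next (L - eps)) (L - eps)). split; [exact Ha | lra].
  - intro n. rewrite (Nat.iter_succ (S n)).
    destruct (Hnext _ (Hbelow (S n))) as [_ [Hlo _]].
    pose proof (Rmax_l (Nat.iter (S n) next (L - eps)) (L - eps)). lra.
Qed.

Lemma increasing_le (c : nat -> R) :
  (forall n, c n < c (S n)) -> forall i j, (i <= j)%nat -> c i <= c j.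
Proof.
  intros Hc i j Hij.
  apply Rge_le, growing_prop; [intro n; apply Rlt_le, Hc | exact Hij].
Qed.

Lemma sumset_add (A : R -> Prop) (k : nat) (a y : R) :
  A a -> sumset k A y -> sumset (S k) A (a + y).
Proof.
  intros Aa [l [Hlen [Hall Hsum]]].
  exists (a :: l). simpl. rewrite Hlen, Hsum. auto.
Qed.

Definition sums_near (A : R -> Prop) (k : nat) (L eps y : R) : Prop :=
  sumset k A y /\ INR k * L - eps < y <= INR k * L.

Lemma contains_omega_pow_mono (m : nat) (S T : R -> Prop) :
  (forall y, S y -> T y) -> contains_omega_pow m S -> contains_omega_pow m T.
Proof.
  intros HST [f [Hf Hmono]]. exists f. split; [intros s Hs; apply HST, Hf, Hs | exact Hmono].
Qed.

Lemma omega_pow_near_zero (A : R -> Prop) (L eps : R) :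
  0 < eps -> contains_omega_pow 0 (sums_near A 0 L eps).
Proof.
  intro Heps. exists (fun _ => 0). split.
  - intros s _. split; [now exists nil|]. simpl. lra.
  - intros [|i s] [|j t] Hs Ht Hlt; simpl in *; try discriminate; contradiction.
Qed.

Lemma omega_pow_near_succ (A : R -> Prop) (L : R) (k : nat) :
  approached_from_below A L ->
  (forall eps, 0 < eps -> contains_omega_pow k (sums_near A k L eps)) ->
  forall eps, 0 < eps -> contains_omega_pow (S k) (sums_near A (S k) L eps).
Proof.
  intros HL IH eps Heps.
  destruct (increasing_sequence_below A L (eps / 2) HL) as [c [Hc Hinc]]; [lra|].
  set (width i := Rmin (eps / 2) (c (S i) - c i)).
  destruct (functional_choice (A := nat) (B := list nat -> R)
    (fun i g => (forall s, length s = k -> sums_near A k L (width i) (g s)) /\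
                (forall s t, length s = k -> length t = k -> lex_lt s t -> g s < g t)))
    as [G HG].
  { intro i. apply IH. apply Rmin_pos; [lra | specialize (Hinc i); lra]. }
  assert (Hblock : forall i s, length s = k ->
            sumset (S k) A (c (S i) + G i s) /\
            c (S i) + INR k * L - width i < c (S i) + G i s <= c (S i) + INR k * L).
  { intros i s Hs. destruct (proj1 (HG i) s Hs) as [Hsum Hwin].
    split; [apply sumset_add; [apply Hc | exact Hsum] | lra]. }
  exists (fun s => match s with nil => 0 | i :: s' => c (S i) + G i s' end). split.
  - intros [|i s] Hs; simpl in Hs; [discriminate|]. injection Hs as Hs.
    destruct (Hblock i s Hs) as [Hsum Hwin]. destruct (Hc (S i)) as [_ Hci].
    pose proof (Rmin_l (eps / 2) (c (S i) - c i)).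
    split; [exact Hsum|]. unfold width in Hwin. rewrite S_INR. lra.
  - intros [|i s] [|j t] Hs Ht Hlt; simpl in Hs, Ht; try discriminate.
    injection Hs as Hs. injection Ht as Ht. simpl in Hlt.
    destruct Hlt as [Hij | [<- Hst]].
    + (* different first entries: the blocks are separated by c_j + kL *)
      destruct (Hblock i s Hs) as [_ Hwi]. destruct (Hblock j t Ht) as [_ Hwj].
      pose proof (Rmin_r (eps / 2) (c (S j) - c j)).
      pose proof (increasing_le c Hinc (S i) j Hij). unfold width in Hwj. lra.
    + apply Rplus_lt_compat_l, (proj2 (HG i)); assumption.
Qed.

Lemma omega_pow_near (A : R -> Prop) (L : R) :
  approached_from_below A L ->
  forall k eps, 0 < eps -> contains_omega_pow k (sums_near A k L eps).
Proof.
  intros HL k. induction k as [|k IH].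
  - apply omega_pow_near_zero.
  - apply omega_pow_near_succ; assumption.
Qed.

Theorem mainTheorem4 (A : R -> Prop)
  (Hnn : forall x, A x -> 0 <= x)
  (Hwo : well_ordered A)
  (Hacc : has_accumulation_point A) :
  forall m : nat, (1 <= m)%nat -> contains_omega_pow m (sumset m A).
Proof.
  intros m _.
  destruct Hacc as [L HL].
  apply (contains_omega_pow_mono m (sums_near A m L 1)).
  - intros y [Hsum _]. exact Hsum.
  - apply omega_pow_near; [apply accumulation_from_below; assumption | lra].
Qed.
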